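(* Let $\mathbb F_q$ be any finite field. Then $R_q(2,t) \leq m_q(t)$ for all integers $t \geq 2$.
   Context: For $A \subseteq \mathbb F_q^n$, the direction set is $A^\to := \{d \in \mathbb F_q^n : \exists x \in \mathbb F_q^n \text{ with } x + \lambda d \in A \text{ for all } \lambda \in \mathbb F_q\}$, and $\omega^\to(A)$ is the largest dimension of a linear subspace of $\mathbb F_q^n$ contained in $A^\to \cup\{0\}$. $m_q(t)$ is the minimum $n$ such that every $A \subseteq \mathbb F_q^n$ with $|A| \geq q^{n-t+1}$ satisfies $\omega^\to(A) \geq t$. $R_q(s,t)$ denotes the minimum $n$ such that for every red-blue coloring of the $1$-dimensional linear subspaces of $\mathbb F_q^n$, there is either a linear subspace of dimension $s$ all of whose $1$-dimensional subspaces are red, or a linear subspace of dimension $t$ all of whose $1$-dimensional subspaces are blue. *)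

From HB Require Import structures.
From mathcomp Require Import all_boot all_order all_algebra all_field.
Set Implicit Arguments. Unset Strict Implicit. Unset Printing Implicit Defensive.
Import GRing.Theory.
Local Open Scope ring_scope.

(* Vectors of F_q^n are row vectors 'rV[F]_n, F a finite field, q = #|F|.
   A linear subspace of dimension k is the row space of a row-free
   k x n matrix. *)

Definition dirset (F : finFieldType) (n : nat) (A : {set 'rV[F]_n}) :
  {set 'rV[F]_n} :=
  [set d | [exists x : 'rV[F]_n, [forall l : F, x + l *: d \in A]]].

Definition has_dir_subspace (F : finFieldType) (n : nat)
  (A : {set 'rV[F]_n}) (k : nat) : bool :=
  [exists U : 'M[F]_(k, n), row_free U &&
     [forall v : 'rV[F]_n, (v <= U)%MS ==> (v \in dirset A) || (v == 0)]].

Definition omega_dir (F : finFieldType) (n : nat) (A : {set 'rV[F]_n}) : nat :=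
  \max_(k < n.+1 | has_dir_subspace A k) k.

(* Property defining m_q(t): every A subset F_q^n with |A| >= q^(n-t+1)
   has omega^->(A) >= t.  (Truncated subtraction is harmless: for
   n - t + 1 <= 0, |A| >= q^(n-t+1) is equivalent to |A| >= 1 = q^0.) *)
Definition m_prop (F : finFieldType) (t n : nat) : Prop :=
  forall A : {set 'rV[F]_n}, (#|F| ^ (n.+1 - t) <= #|A|)%N -> (t <= omega_dir A)%N.

(* A colouring of the 1-dimensional subspaces is given as a function on
   subspaces (square matrices, canonical representative <<v>>%MS), of
   which only the values at the lines <<v>>%MS, v != 0, matter.
   true = red, false = blue. *)
Definition mono_subspace (F : finFieldType) (n : nat)
  (c : 'M[F]_n -> bool) (col : bool) (k : nat) : Prop :=
  exists U : 'M[F]_(k, n), row_free U /\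
    forall v : 'rV[F]_n, v != 0 -> (v <= U)%MS -> c (<<v>>%MS) = col.

Definition ramsey_prop (F : finFieldType) (s t n : nat) : Prop :=
  forall c : 'M[F]_n -> bool, mono_subspace c true s \/ mono_subspace c false t.

(* Colour the lines of F_q^n and let S be the cone of nonzero vectors spanning
   red lines; put N = q^(n-t+1).  If |S| >= N, S has a t-dimensional space U of
   directions: a red d in U is the direction of an affine line x + F d inside S,
   and then span(x, d) is a red plane; otherwise U is blue.  If |S| <= N - 2, a
   t-dimensional subspace missing S is built by projecting along a vector outside
   S and inducting on the dimension.  In the boundary case |S| = N - 1, either an
   affine line s' + F s lies in S, giving a red plane, or some v = s' + mu s is
   blue, and projecting along v identifies s' with -mu s, which buys the missing
   unit in the count.  Here N >= q^2, since testing the hypothesis on a single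
   line shows t < n. *)

From mathcomp Require Import all_boot all_order all_algebra all_field.
From mathcomp Require Import zify.
Set Implicit Arguments. Unset Strict Implicit. Unset Printing Implicit Defensive.
Import GRing.Theory.
Local Open Scope ring_scope.

Section Subspaces.
Variables (F : finFieldType) (n : nat).
Local Notation q := #|F|.
Implicit Types (S A : {set 'rV[F]_n}) (V W : 'M[F]_n).

Definition punctured_cone S :=
  0 \notin S /\ forall s a, s \in S -> a != 0 -> a *: s \in S.

Definition avoids W S := forall s, s \in S -> ~~ (s <= W)%MS.

Definition has_avoiding_subspace V S k :=
  exists W, [/\ (W <= V)%MS, \rank W = k & avoids W S].

Let q_gt0 : (0 < q)%N. Proof. exact/ltnW/card_finNzRing_gt1. Qed.

Lemma exists_nonzero_outside V S : (#|S|.+2 <= q ^ \rank V)%N ->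
  exists v : 'rV[F]_n, [/\ (v <= V)%MS, v != 0 & v \notin S].
Proof.
move=> hS; pose I := [set u *m row_base V | u : 'rV[F]_(\rank V)].
have cardI : #|I| = (q ^ \rank V)%N.
  by rewrite card_imset ?card_mx ?mul1n //; apply/row_free_inj/row_base_free.
have [IS | /subsetPn[v vI vS]] := boolP (I \subset 0 |: S).
  have := subset_leq_card IS; rewrite cardI cardsU1 leqNgt => /negP[].
  by apply: leq_ltn_trans hS; rewrite -[#|S|.+1]add1n leq_add2r leq_b1.
move: vS; rewrite !inE negb_or => /andP[v0 vS]; exists v; split=> //.
by case/imsetP: vI => u _ ->; rewrite (submx_trans (submxMl _ _)) ?eq_row_base.
Qed.

Section ProjectionAlongLine.
Variables (V : 'M[F]_n) (v : 'rV[F]_n).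
Hypotheses (vV : (v <= V)%MS) (v0 : v != 0).
Local Notation H := (V :\: <<v>>)%MS.
Local Notation P := (proj_mx H <<v>>%MS).

Lemma addsmx_compl_line : (H + <<v>> :=: V)%MS.
Proof.
have vV' : (<<v>> <= V)%MS by rewrite genmxE.
apply: eqmx_trans (addsmx_diff_cap_eq V <<v>>%MS).
by apply: adds_eqmx => //; apply/eqmx_sym/capmx_idPr.
Qed.

Lemma mxrank_compl_line : (\rank H).+1 = \rank V.
Proof.
have rv : \rank <<v>>%MS = 1%N by rewrite genmxE rank_rV v0.
by have := mxrank_disjoint_sum (capmx_diff V <<v>>%MS); rewrite addsmx_compl_line rv addn1.
Qed.

Lemma proj_line_cone S : punctured_cone S -> (forall s, s \in S -> (s <= V)%MS) ->
  v \notin S -> punctured_cone [set s *m P | s in S].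
Proof.
move=> [S0 SZ] SV vS; split; last first.
  by move=> _ a /imsetP[s sS ->] a0; apply/imsetP; exists (a *: s); rewrite ?SZ ?scalemxAl.
apply/imsetP=> -[s sS /esym sP0].
have sHv : (s <= H + <<v>>)%MS by rewrite addsmx_compl_line SV.
have : (s <= <<v>>)%MS.
  by rewrite -(add_proj_mx (capmx_diff V <<v>>%MS) sHv) sP0 add0r proj_mx_sub.
rewrite genmxE => /sub_rVP[a sa].
have a0 : a != 0 by apply: contraNneq S0 => a0; rewrite -[0](scale0r v) -a0 -sa.
by move: vS; rewrite -[v](scalerK a0) -sa SZ ?invr_eq0.
Qed.

Lemma avoids_lift S W : (W <= H)%MS -> avoids W [set s *m P | s in S] ->
  avoids (W + <<v>>)%MS S.
Proof.
move=> WH avW s sS; apply/negP=> /sub_addsmxP[u es].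
have : s *m P = u.1 *m W.
  rewrite es mulmxDl -!mulmxA (proj_mx_id (capmx_diff V <<v>>%MS) WH).
  by rewrite (proj_mx_0 (capmx_diff V <<v>>%MS)) ?mulmx0 ?addr0.
by move/(_ _ (imset_f _ sS)): avW => /[swap] ->; rewrite submxMl.
Qed.

Lemma has_avoiding_subspace_lift S k :
  has_avoiding_subspace H [set s *m P | s in S] k -> has_avoiding_subspace V S k.+1.
Proof.
move=> [W [WH rW avW]]; exists (W + <<v>>)%MS; split.
- by rewrite -addsmx_compl_line addsmxS.
- rewrite mxrank_disjoint_sum ?genmxE ?rank_rV ?v0 ?rW ?addn1 //.
  by apply/eqP; rewrite -submx0 -(capmx_diff V <<v>>%MS) capmxS.
- exact: avoids_lift.
Qed.

End ProjectionAlongLine.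

Lemma exists_notin_line S s : punctured_cone S -> (q <= #|S|)%N -> s \in S ->
  exists2 s', s' \in S & ~~ (s' <= s)%MS.
Proof.
move=> [S0 _] qS sS.
have [/existsP[s' /andP[]] | /existsPn inline] :=
  boolP [exists s', (s' \in S) && ~~ (s' <= s)%MS]; first by exists s'.
have sub : S \subset [set a *: s | a : F] :\ 0.
  apply/subsetP=> y yS; rewrite in_setD1; apply/andP; split.
    by apply: contraNneq S0 => <-.
  by move: (inline y); rewrite yS negbK => /sub_rVP[a ->]; apply: imset_f.
have line0 : 0 \in [set a *: s | a : F] by apply/imsetP; exists 0; rewrite ?scale0r.
have card_line := leq_imset_card (fun a : F => a *: s) F.
have := cardsD1 0 [set a *: s | a : F]; rewrite line0 add1n => card_punctured.
have := leq_trans (leq_trans card_line qS) (subset_leq_card sub).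
by rewrite card_punctured ltnn.
Qed.

Lemma has_avoiding_subspace_card k V S : punctured_cone S ->
    (forall s, s \in S -> (s <= V)%MS) ->
  (#|S|.+2 * q ^ k <= q ^ (\rank V).+1)%N -> has_avoiding_subspace V S k.
Proof.
elim: k V S => [|k IHk] V S coneS SV hS.
  exists 0; split; rewrite ?sub0mx ?mxrank0 // => s sS.
  by rewrite submx0; apply: contraNneq coneS.1 => <-.
have [|v [vV v0 vS]] := exists_nonzero_outside (S := S) (V := V).
  rewrite -(leq_pmul2r q_gt0) -expnSr (leq_trans _ hS) // leq_mul2l.
  by rewrite expnS leq_pmulr ?orbT // expn_gt0 q_gt0.
apply: (has_avoiding_subspace_lift vV v0).
apply: IHk; [exact: proj_line_cone | by move=> _ /imsetP[s _ ->]; apply: proj_mx_sub |].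
rewrite -(leq_pmul2r q_gt0) mxrank_compl_line // -mulnA -!expnSr (leq_trans _ hS) //.
by rewrite leq_mul2r !ltnS leq_imset_card orbT.
Qed.

Lemma has_avoiding_subspace_collapse k V S s1 s2 : punctured_cone S ->
    (forall s, s \in S -> (s <= V)%MS) ->
    s1 \in S -> s2 \in S -> s1 != s2 -> s1 - s2 \notin S ->
  (#|S|.+1 * q ^ k <= q ^ \rank V)%N -> has_avoiding_subspace V S k.+1.
Proof.
move=> coneS SV s1S s2S s12 vS hS; set v := s1 - s2.
have vV : (v <= V)%MS by rewrite addmx_sub ?eqmx_opp ?SV.
have v0 : v != 0 by rewrite subr_eq0.
apply: (has_avoiding_subspace_lift vV v0).
set P := proj_mx _ _.
have collapse : s1 *m P = s2 *m P.
  by apply/eqP; rewrite -subr_eq0 -mulmxBl (proj_mx_0 (capmx_diff _ _)) ?genmxE.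
have cardP : (#|[set s *m P | s in S]| < #|S|)%N.
  have sub : [set s *m P | s in S] \subset [set s *m P | s in S :\ s1].
    apply/subsetP=> _ /imsetP[s sS ->]; apply/imsetP.
    have [-> | ss1] := eqVneq s s1; first by exists s2; rewrite // !inE eq_sym s12.
    by exists s; rewrite // !inE ss1.
  rewrite (cardsD1 s1 S) s1S add1n ltnS.
  exact: leq_trans (subset_leq_card sub) (leq_imset_card _ _).
apply: has_avoiding_subspace_card.
- exact: proj_line_cone.
- by move=> _ /imsetP[s _ ->]; apply: proj_mx_sub.
by rewrite mxrank_compl_line //; apply: leq_trans hS; rewrite leq_mul2r ltnS cardP orbT.
Qed.

Lemma dirset_sub m A (V : 'M_(m, n)) : (forall x, x \in A -> (x <= V)%MS) ->
  forall d, d \in dirset A -> (d <= V)%MS.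
Proof.
move=> AV d; rewrite inE => /existsP[x /forallP xdA].
have := xdA 0; have := xdA 1; rewrite scale0r addr0 scale1r => /AV xdV /AV xV.
by rewrite -(addKr x d) addmx_sub ?eqmx_opp.
Qed.

Lemma has_dir_subspace_rank m A (V : 'M_(m, n)) k : (forall x, x \in A -> (x <= V)%MS) ->
  has_dir_subspace A k -> (k <= \rank V)%N.
Proof.
move=> AV /existsP[U /andP[/eqP rU /forallP Udir]]; rewrite -rU.
apply/mxrankS/row_subP => i.
move: (Udir (row i U)); rewrite row_sub /= => /orP[/(dirset_sub AV) // | /eqP ->].
exact: sub0mx.
Qed.

Lemma omega_dirP A : has_dir_subspace A (omega_dir A).
Proof.
have : (0 < #|[pred k : 'I_n.+1 | has_dir_subspace A k]|)%N.
  apply/card_gt0P; exists ord0; apply/existsP; exists 0.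
  rewrite /row_free mxrank0 eqxx /=; apply/forallP => v; apply/implyP.
  by move/submx0null ->; rewrite eqxx orbT.
case/(eq_bigmax_cond (fun k : 'I_n.+1 => k : nat)) => k Ak maxk.
by rewrite /omega_dir [X in has_dir_subspace _ X](_ : _ = k :> nat).
Qed.

Lemma m_prop_lt t : (2 <= t)%N -> m_prop F t n -> (t < n)%N.
Proof.
move=> ht hm; rewrite ltnNge; apply/negP => nt.
pose e : 'rV[F]_n := const_mx 1; pose A := [set a *: e | a : F].
have Ae x : x \in A -> (x <= e)%MS by case/imsetP=> a _ ->; apply: scalemx_sub.
suff /hm tA : (q ^ (n.+1 - t) <= #|A|)%N.
  have := leq_trans tA (has_dir_subspace_rank Ae (omega_dirP A)).
  by move/leq_trans/(_ (rank_leq_row e)); lia.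
case En : (n.+1 - t)%N => [|[|m]]; last lia.
  by rewrite card_gt0; apply/set0Pn; exists 0; apply/imsetP; exists 0; rewrite ?scale0r.
have n_gt0 : (0 < n)%N by lia.
have e0 : e != 0.
  by apply/eqP => /matrixP/(_ 0 (Ordinal n_gt0)); rewrite !mxE; apply/eqP/oner_neq0.
rewrite expn1 card_imset // => a b /eqP; rewrite -subr_eq0 -scalerBl scaler_eq0.
by rewrite (negbTE e0) orbF subr_eq0 => /eqP.
Qed.

End Subspaces.

Section Colouring.
Variables (F : finFieldType) (n : nat) (c : 'M[F]_n -> bool).
Local Notation q := #|F|.

Definition red_set := [set x : 'rV[F]_n | (x != 0) && c <<x>>%MS].

Lemma red_cone : punctured_cone red_set.
Proof.
split=> [|s a]; first by rewrite inE eqxx.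
rewrite !inE => /andP[s0 cs] a0.
by rewrite scaler_eq0 negb_or a0 s0 (eq_genmx (eqmx_scale _ a0)).
Qed.

Lemma mono_subspaceW m (W : 'M[F]_(m, n)) k col : (k <= \rank W)%N ->
  (forall v : 'rV_n, v != 0 -> (v <= W)%MS -> c <<v>>%MS = col) ->
  mono_subspace c col k.
Proof.
move=> kW monoW; pose U : 'M_(k, n) := pid_mx k *m row_base W.
have rU : \rank U = k by rewrite mxrankMfree ?row_base_free // rank_pid_mx.
exists U; split=> [|v v0 vU]; first by rewrite /row_free rU.
by apply: monoW; rewrite // (submx_trans vU) // (submx_trans (submxMl _ _)) ?eq_row_base.
Qed.

Lemma mono_blue V k : has_avoiding_subspace V red_set k -> mono_subspace c false k.
Proof.
case=> W [_ <- avW]; apply: mono_subspaceW => // v v0 vW.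
by apply: negbTE; move: (avW v); rewrite inE v0 vW => /implyP; rewrite implybF.
Qed.

Lemma red_plane s d : d \in red_set -> (forall mu, s + mu *: d \in red_set) ->
  mono_subspace c true 2.
Proof.
have [red0 redZ] := red_cone; move=> dred sdred.
have d0 : d != 0 by apply: contraNneq red0 => <-.
have sd : ~~ (s <= d)%MS.
  apply/negP => /sub_rVP[a sa]; move: (sdred (- a)).
  by rewrite sa -scalerDl addrN scale0r (negbTE red0).
apply: (@mono_subspaceW _ (d + s)%MS).
  have := mxrank_leqif_sup (addsmxSl d s); rewrite addsmx_sub submx_refl (negbTE sd).
  by rewrite rank_rV d0 => /ltn_leqif.
move=> v v0 /sub_addsmxP[[u1 u2] /=]; rewrite (mx11_scalar u1) (mx11_scalar u2).
rewrite !mul_scalar_mx => ev.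
suff : v \in red_set by rewrite inE v0.
have [a0 | a0] := eqVneq (u2 0 0) 0.
  rewrite ev a0 scale0r addr0 redZ //; apply: contraNneq v0 => b0.
  by rewrite ev a0 b0 !scale0r addr0.
suff -> : v = u2 0 0 *: (s + (u1 0 0 / u2 0 0) *: d) by rewrite redZ.
by rewrite ev scalerDr scalerA mulrC divfK // addrC.
Qed.

Lemma mono_blue_card k : (#|red_set|.+2 * q ^ k <= q ^ n.+1)%N ->
  mono_subspace c false k.
Proof.
move=> hred; apply: (@mono_blue 1%:M).
by apply: has_avoiding_subspace_card red_cone (fun s _ => submx1 s) _; rewrite mxrank1.
Qed.

Lemma ramsey_of_dir_subspace t k : (t <= k)%N -> has_dir_subspace red_set k ->
  mono_subspace c true 2 \/ mono_subspace c false t.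
Proof.
move=> tk /existsP[U /andP[/eqP rU /forallP Udir]].
have [/existsP[d /and3P[dU d0 dred]] | /existsPn Ublue] :=
  boolP [exists d, [&& (d <= U)%MS, d != 0 & d \in red_set]].
  left; move: (Udir d); rewrite dU (negbTE d0) orbF inE => /existsP[x /forallP].
  exact: red_plane dred.
right; apply: (mono_subspaceW (W := U)); rewrite ?rU // => v v0 vU.
by move: (Ublue v); rewrite vU v0 inE v0 /= => /negbTE.
Qed.

Lemma ramsey_of_card_red k : (q <= #|red_set|)%N ->
    (#|red_set|.+1 * q ^ k <= q ^ n)%N ->
  mono_subspace c true 2 \/ mono_subspace c false k.+1.
Proof.
have [_ redZ] := red_cone; move=> q_red hred.
have [s sred] : exists s, s \in red_set.
  by apply/card_gt0P; apply: leq_trans q_red; apply/ltnW/card_finNzRing_gt1.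
have [s' s'red s's] := exists_notin_line red_cone q_red sred.
have [/forallP allred | /forallPn[mu vblue]] := boolP [forall mu, s' + mu *: s \in red_set].
  by left; apply: red_plane sred allred.
have mu0 : mu != 0 by apply: contraNneq vblue => ->; rewrite scale0r addr0.
right; apply: (@mono_blue 1%:M); apply: (@has_avoiding_subspace_collapse _ _ _ _ _ s' (- mu *: s)).
- exact: red_cone.
- by move=> *; apply: submx1.
- exact: s'red.
- by rewrite redZ ?oppr_eq0.
- by apply: contraNneq s's => ->; rewrite scalemx_sub.
- by rewrite scaleNr opprK.
- by rewrite mxrank1.
Qed.

End Colouring.

Theorem lemma6p2 (F : finFieldType) (t : nat) (ht : (2 <= t)%N) (n : nat) :
  m_prop F t n -> (forall k : nat, (k < n)%N -> ~ m_prop F t k) ->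
  exists2 r : nat, (r <= n)%N & ramsey_prop F 2 t r.
Proof.
move=> hm _; exists n => // c.
have tn := m_prop_lt ht hm.
have q_gt1 := card_finNzRing_gt1 F.
have [big | small] := leqP (#|F| ^ (n.+1 - t)) #|red_set c|.
  exact: ramsey_of_dir_subspace (hm _ big) (omega_dirP _).
have [smaller | edge] := leqP #|red_set c|.+2 (#|F| ^ (n.+1 - t)).
  right; apply: mono_blue_card.
  have -> : (#|F| ^ n.+1 = #|F| ^ (n.+1 - t) * #|F| ^ t)%N.
    by rewrite -expnD; congr (_ ^ _)%N; lia.
  by rewrite leq_mul2r smaller orbT.
have q_red : (#|F| <= #|red_set c|)%N.
  have q2 : (#|F| ^ 2 <= #|F| ^ (n.+1 - t))%N by rewrite leq_pexp2l ?(ltnW q_gt1) //; lia.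
  rewrite -2!ltnS; apply: leq_ltn_trans _ edge; apply: leq_trans q2.
  by rewrite -mulnn ltn_Pmull ?(ltnW q_gt1).
rewrite -(prednK (ltnW ht)); apply: ramsey_of_card_red => //.
have -> : (#|F| ^ n = #|F| ^ (n.+1 - t) * #|F| ^ t.-1)%N.
  by rewrite -expnD; congr (_ ^ _)%N; lia.
by rewrite leq_mul2r small orbT.
Qed.
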